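(* Let $N\ge1$, let $\mathbf{K}\in\mathbb{R}^{N\times N}$ be the cyclic shift matrix ($(\mathbf{K}\mathbf{x})_1=x_N$, $(\mathbf{K}\mathbf{x})_i=x_{i-1}$ for $i\ge2$), $\mathbf{K}(\nu)=(1-\nu)\mathbf{I}+\nu\mathbf{K}$, $\mathbf{L}_h=N^2(\mathbf{K}+\mathbf{K}^T-2\mathbf{I})$, and for $\tilde\nu\in\mathbb{R}$ let $\mathcal{K}(\tilde\nu)=\mathbf{K}^{\lfloor\tilde\nu\rfloor}\mathbf{K}(\tilde\nu-\lfloor\tilde\nu\rfloor)$ (with $\mathbf{K}^{-1}=\mathbf{K}^T$). Let $\mathbf{A}\in\mathbb{R}^{N\times M}$ with columns $\mathbf{a}_1,\dots,\mathbf{a}_M$, let $\mathbf{b}\in\mathbb{R}^N$ (the pivot), let $\tilde\nu_j\in\operatorname{argmin}_{\tilde\omega\ge0}\|\mathbf{a}_j-\mathcal{K}(\tilde\omega)^T\mathbf{b}\|_2^2$ for $j=1,\dots,M$, and let $\mathring{\mathbf{A}}$ be the matrix whose $j$-th column is $\mathcal{K}(-\tilde\nu_j)\mathbf{a}_j$. If $\varphi$ is an eigenvector of $\mathring{\mathbf{A}}^T\mathring{\mathbf{A}}$ with eigenvalue $\lambda$, then for every $\tilde\nu\in\mathbb{R}$, $\varphi$ is also an eigenvector of $(\mathcal{K}(\tilde\nu)\mathring{\mathbf{A}})^T(\mathcal{K}(\tilde\nu)\mathring{\mathbf{A}})$ with the same eigenvalue $\lambda$, up to $\mathcal{O}(1/N^2)$;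 that is, $(\mathcal{K}(\tilde\nu)\mathring{\mathbf{A}})^T(\mathcal{K}(\tilde\nu)\mathring{\mathbf{A}})\varphi=\lambda\varphi+\frac{1}{N^2}\mathring{\mathbf{A}}^T\mathbf{C}\mathring{\mathbf{A}}\varphi$ where $\mathbf{C}$ is a scalar multiple of $\mathbf{L}_h$.
   Context: Convention: a matrix term $\frac1{N^2}\mathbf{C}$ with $\mathbf{C}$ a multiple of the discrete Laplacian $\mathbf{L}_h$ is regarded as $\mathcal{O}(1/N^2)$ (it is of that size when acting on grid discretizations of twice differentiable functions). *)

From HB Require Import structures.
From mathcomp Require Import all_boot all_order all_algebra.
From mathcomp Require Import reals.
Set Implicit Arguments. Unset Strict Implicit. Unset Printing Implicit Defensive.
Import Order.TTheory GRing.Theory Num.Theory.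
Local Open Scope ring_scope.

Section Defs.
Variables (R : realType) (N : nat).

Definition mxpow (A : 'M[R]_N) (k : nat) : 'M[R]_N := iter k (mulmx A) 1%:M.

(* cyclic shift: (K x)_1 = x_N, (K x)_i = x_{i-1}; entry K i j = 1 iff i = j+1 mod N *)
Definition shiftK : 'M[R]_N :=
  \matrix_(i < N, j < N) (((i : nat) == (j.+1 %% N)%N)%:R : R).

Definition Knu (nu : R) : 'M[R]_N := (1 - nu) *: 1%:M + nu *: shiftK.

Definition Lh : 'M[R]_N := (N%:R ^+ 2) *: (shiftK + shiftK^T - 2%:R *: 1%:M).

Definition Kzpow (m : int) : 'M[R]_N :=
  match m with
  | Posz n => mxpow shiftK n
  | Negz n => mxpow shiftK^T n.+1
  end.

Definition calK (nu : R) : 'M[R]_N :=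
  Kzpow (Num.floor nu) *m Knu (nu - (Num.floor nu)%:~R).

Definition sqnorm (v : 'cV[R]_N) : R := \sum_(i < N) (v i 0) ^+ 2.

Definition is_shift_argmin (a b : 'cV[R]_N) (nu : R) : Prop :=
  0 <= nu /\
  forall om : R, 0 <= om ->
    sqnorm (a - (calK nu)^T *m b) <= sqnorm (a - (calK om)^T *m b).

End Defs.

(* The shift K is a permutation matrix, so all its integer powers are
   orthogonal and drop out of the Gram matrix of calK(x) = K^floor(x) K(f),
   f = x - floor x.  What remains is the Gram matrix of the stencil
   K(f) = (1-f) I + f K, which is I + f (1-f) (K + K^T - 2I) = I + f (1-f) L_h / N^2. *)
From HB Require Import structures.
From mathcomp Require Import all_boot all_order all_algebra.
From mathcomp Require Import reals ring.
Import Order.TTheory GRing.Theory Num.Theory.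
Local Open Scope ring_scope.

Lemma gram_mulmx (R : comPzSemiRingType) (m n p : nat)
    (Q : 'M[R]_(m, n)) (P : 'M[R]_(n, p)) :
  (Q *m P)^T *m (Q *m P) = P^T *m (Q^T *m Q) *m P.
Proof. by rewrite trmx_mul !mulmxA. Qed.

Lemma gram_orthomx_mull (R : comPzSemiRingType) (m n : nat)
    (Q : 'M[R]_m) (P : 'M[R]_(m, n)) :
  Q^T *m Q = 1%:M -> (Q *m P)^T *m (Q *m P) = P^T *m P.
Proof. by move=> QQ; rewrite gram_mulmx QQ mulmx1. Qed.

Lemma mxpow_orthomx (R : realType) (N : nat) (P : 'M[R]_N) (n : nat) :
  P^T *m P = 1%:M -> (mxpow P n)^T *m mxpow P n = 1%:M.
Proof.
move=> PP; elim: n => [|n IHn]; first by rewrite /mxpow /= trmx1 mulmx1.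
by rewrite [mxpow P n.+1]/= gram_orthomx_mull.
Qed.

Section Shift.
Variables (R : realType) (N : nat).
Hypothesis N_gt0 : (0 < N)%N.

Local Notation K := (shiftK R N).
Local Notation fracr x := (x - (Num.floor x)%:~R).

Lemma shiftK_orthomx : K^T *m K = 1%:M.
Proof.
apply/matrixP => i j; rewrite !mxE.
pose si : 'I_N := Ordinal (ltn_pmod i.+1 N_gt0).
rewrite (bigD1 si) //= big1 ?addr0 => [|k ksi].
  rewrite !mxE eqxx mul1r /si /= -[i.+1]addn1 -[j.+1]addn1 eqn_modDr !modn_small //.
rewrite !mxE; suff /negbTE -> : (k : nat) != (i.+1 %% N)%N by rewrite mul0r.
by apply: contra ksi => /eqP ksi; apply/eqP/val_inj.
Qed.

Lemma Kzpow_orthomx (m : int) : (Kzpow R N m)^T *m Kzpow R N m = 1%:M.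
Proof.
case: m => n; apply: mxpow_orthomx; first exact: shiftK_orthomx.
by rewrite trmxK; apply: mulmx1C; apply: shiftK_orthomx.
Qed.

Lemma trmx_Knu (t : R) : (Knu N t)^T = (1 - t) *: 1%:M + t *: K^T.
Proof. by apply/matrixP => i j; rewrite !mxE eq_sym. Qed.

Lemma Knu_gram (t : R) :
  (Knu N t)^T *m Knu N t = 1%:M + (t * (1 - t)) *: (K + K^T - 2%:R *: 1%:M).
Proof.
rewrite trmx_Knu /Knu mulmxDl !mulmxDr -!scalemxAl -!scalemxAr.
rewrite !mul1mx !mulmx1 shiftK_orthomx.
by apply/matrixP => i j; rewrite !mxE; ring.
Qed.

Lemma calK_gram (x : R) :
  (calK N x)^T *m calK N x =
  1%:M + (fracr x * (1 - fracr x)) *: (K + K^T - 2%:R *: 1%:M).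
Proof. by rewrite /calK gram_orthomx_mull ?Knu_gram ?Kzpow_orthomx. Qed.

End Shift.

Theorem proposition3p1 (R : realType) (N M : nat) (hN : (0 < N)%N)
  (A : 'M[R]_(N, M)) (b : 'cV[R]_N) (nu : 'I_M -> R)
  (hnu : forall j : 'I_M, is_shift_argmin (col j A) b (nu j))
  (phi : 'cV[R]_M) (lam : R) :
  let Ar : 'M[R]_(N, M) := \matrix_(i < N, j < M) ((@calK R N (- nu j) *m col j A) i 0) in
  phi != 0 ->
  Ar^T *m Ar *m phi = lam *: phi ->
  forall nut : R,
    exists c : R,
      let C := c *: @Lh R N in
      (@calK R N nut *m Ar)^T *m (@calK R N nut *m Ar) *m phi
        = lam *: phi + (N%:R ^+ 2)^-1 *: (Ar^T *m C *m Ar *m phi).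
Proof.
move=> Ar _ eig_phi nut.
set f := nut - (Num.floor nut)%:~R.
exists (f * (1 - f)) => C.
rewrite gram_mulmx calK_gram //.
rewrite mulmxDr mulmx1 !mulmxDl eig_phi; congr (_ + _).
have N2_neq0 : (N%:R ^+ 2 : R) != 0 by rewrite expf_neq0 // pnatr_eq0 -lt0n.
by rewrite /C /Lh scalerA -!scalemxAr -!scalemxAl scalerA mulrCA mulVf ?mulr1.
Qed.
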